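(* Let $(X,d,\preccurlyeq)$ be a preordered $s$-regular $b$-metric space. Let $T,S:X\to X$ be self mappings and suppose there exists $x_0\in X$ such that $T(x_0)\succcurlyeq S(x_0)$. Suppose that: (i) $T$ is isotone; (ii) $S$ covers $T$ from above on the set $O^*_X(x_0)$; (iii) every chain $C\in\mathcal{C}^*(x_0,T,S,\preccurlyeq)$ has an upper bound $w\in X$ (i.e. $x\preccurlyeq w$ for all $x\in C$) satisfying $w\succcurlyeq T(w)$, and there exists $z\in X$ such that $S^i(z)\succcurlyeq S(w)\succcurlyeq T(w)$ for all $i\in\mathbb{N}$ and $d(T^i(w),S^i(z))\to 0$ as $i\to\infty$. Then the set $\mathrm{Coin}(T,S)\cap O^*_X(x_0)$ is nonempty and contains a maximal element.
   Context: A $b$-metric space with coefficient $s\ge 1$ is a nonempty set $X$ with a function $d:X\times X\to[0,\infty)$ such that for all $x,y,z\in X$: $d(x,y)=0$ iff $x=y$; $d(x,y)=d(y,x)$; $d(x,y)\le s[d(x,z)+d(z,y)]$. A preorder is a reflexive and transitive binary relation $\preccurlyeq$; $x\succcurlyeq y$ means $y\preccurlyeq x$, and $x\prec y$ means $x\preccurlyeq y$ and $x\ne y$. A preordered $s$-regular $b$-metric space $(X,d,\preccurlyeq)$ is a $b$-metric space with coefficient $s\ge1$ equipped with a preorder $\preccurlyeq$ such that for all $x,y,z\in X$, $x\preccurlyeq y\preccurlyeq z$ implies $\max\{d(x,y),d(y,z)\}\le s^2 d(x,z)$. A chain is a subset of $X$ any two elements of which are comparable. A map $T$ is isotone if $x\preccurlyeq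 y$ implies $T(x)\preccurlyeq T(y)$. $T^i$ denotes the $i$-th iterate. For $x_0\in X$, $O^*_X(x_0)=\{x\in X: x\succcurlyeq x_0\}$. $\mathrm{Coin}(T,S)=\{x: T(x)=S(x)\}$. A map $S$ covers a map $T$ from above on a set $A\subset X$ if for every $x\in A$ with $T(x)\succcurlyeq S(x)$ there exists $y\in X$ with $y\succcurlyeq x$ and $S(y)=T(x)$. $\mathcal{C}^*(T,S,\preccurlyeq)$ is the set of chains $C\subset X$ such that for all $x,y\in C$: $T(x)\succcurlyeq S(x)$; $x\prec y$ implies $T(x)\preccurlyeq S(y)$; and $S(C)\subset T(X)$. $\mathcal{C}^*(x_0,T,S,\preccurlyeq)=\{C\in\mathcal{C}^*(T,S,\preccurlyeq): C\subset O^*_X(x_0)\text{ and } S(C)\subset T(O^*_X(x_0))\}$. A maximal element of a set $A\subset X$ is an element $w\in A$ such that there is no $u\in A$ with $w\prec u$. *)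

From Stdlib Require Import Reals.
Open Scope R_scope.

Definition is_b_metric {X : Type} (d : X -> X -> R) (s : R) : Prop :=
  1 <= s /\
  (forall x y, 0 <= d x y) /\
  (forall x y, d x y = 0 <-> x = y) /\
  (forall x y, d x y = d y x) /\
  (forall x y z, d x y <= s * (d x z + d z y)).

Definition is_preorder {X : Type} (le : X -> X -> Prop) : Prop :=
  (forall x, le x x) /\ (forall x y z, le x y -> le y z -> le x z).

Definition preordered_s_regular_bms {X : Type} (d : X -> X -> R) (s : R)
  (le : X -> X -> Prop) : Prop :=
  is_b_metric d s /\ is_preorder le /\
  (forall x y z, le x y -> le y z ->
     Rmax (d x y) (d y z) <= s ^ 2 * d x z).

Definition strict {X : Type} (le : X -> X -> Prop) (x y : X) : Prop :=
  le x y /\ x <> y.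

Definition is_chain {X : Type} (le : X -> X -> Prop) (C : X -> Prop) : Prop :=
  forall x y, C x -> C y -> le x y \/ le y x.

Definition isotone {X : Type} (le : X -> X -> Prop) (T : X -> X) : Prop :=
  forall x y, le x y -> le (T x) (T y).

Definition Ostar {X : Type} (le : X -> X -> Prop) (x0 : X) (x : X) : Prop :=
  le x0 x.

Definition Coin {X : Type} (T S : X -> X) (x : X) : Prop := T x = S x.

Definition covers_from_above {X : Type} (le : X -> X -> Prop) (S T : X -> X)
  (A : X -> Prop) : Prop :=
  forall x, A x -> le (S x) (T x) -> exists y, le x y /\ S y = T x.

Definition Cstar {X : Type} (le : X -> X -> Prop) (T S : X -> X)
  (C : X -> Prop) : Prop :=
  is_chain le C /\
  (forall x, C x -> le (S x) (T x)) /\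
  (forall x y, C x -> C y -> strict le x y -> le (T x) (S y)) /\
  (forall x, C x -> exists u, S x = T u).

Definition Cstar0 {X : Type} (le : X -> X -> Prop) (x0 : X) (T S : X -> X)
  (C : X -> Prop) : Prop :=
  Cstar le T S C /\
  (forall x, C x -> Ostar le x0 x) /\
  (forall x, C x -> exists u, Ostar le x0 u /\ S x = T u).

Definition maximal_in {X : Type} (le : X -> X -> Prop) (A : X -> Prop)
  (w : X) : Prop :=
  A w /\ ~ (exists u, A u /\ strict le w u).

(** Along [T^(n+1) w ≼ T w ≼ S w ≼ S^(n+1) z], s-regularity gives
    [d(Tw, Sw) <= s^4 d(T^(n+1) w, S^(n+1) z)], which tends to 0; hence the
    upper bound [w] supplied by hypothesis (iii) is a coincidence point.
    Every chain of coincidence points above [x0] belongs to [C*(x0,T,S)], so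
    Zorn's lemma yields a coincidence point that is maximal for the preorder;
    it is maximal in the strict sense because s-regularity makes the preorder
    antisymmetric.  Coincidence
    points exist because the covering hypothesis gives [y ≽ x0] with
    [S y = T x0], and the singleton [{y}] belongs to [C*(x0,T,S)]. *)

From Stdlib Require Import Reals Lra.
From mathcomp Require Import all_boot.
From mathcomp Require Import boolp classical_sets.
Open Scope R_scope.

Lemma Rle_0_of_le_null_tail (D c : R) (u : nat -> R) :
  Un_cv u 0 -> (forall n, D <= c * u n.+1) -> D <= 0.
Proof.
move=> u_cv0 D_le.
have const_cv a : Un_cv (fun _ => a) a.
  by exists 0%nat => n _; rewrite /R_dist Rminus_diag_eq // Rabs_R0.
have tail_cv : Un_cv (fun n => c * u (n + 1)%nat) (c * 0).
  exact: CV_mult (const_cv c) (CV_shift' u 1 0 u_cv0).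
rewrite -(Rmult_0_r c).
by apply: Rle_cv_lim (const_cv D) tail_cv => n; rewrite addn1.
Qed.

Section RegularBMetric.

Context {X : Type} {d : X -> X -> R} {s : R} {le : X -> X -> Prop}.
Hypothesis space : preordered_s_regular_bms d s le.

Lemma regular_antisym {x y} : le x y -> le y x -> x = y.
Proof.
move: space => [[_ [d_ge0 [d_eq0 _]]] [_ regular]] le_xy le_yx.
apply/d_eq0/Rle_antisym => //.
have := regular _ _ _ le_xy le_yx.
rewrite (proj2 (d_eq0 x x) erefl) Rmult_0_r.
exact/Rle_trans/Rmax_l.
Qed.

Lemma regular_dist_left {x y z} : le x y -> le y z -> d x y <= s ^ 2 * d x z.
Proof.
move: space => [_ [_ regular]] le_xy le_yz.
exact: Rle_trans (Rmax_l _ _) (regular _ _ _ le_xy le_yz).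
Qed.

Lemma regular_dist_right {x y z} : le x y -> le y z -> d y z <= s ^ 2 * d x z.
Proof.
move: space => [_ [_ regular]] le_xy le_yz.
exact: Rle_trans (Rmax_r _ _) (regular _ _ _ le_xy le_yz).
Qed.

Lemma iter_le_of_le {T : X -> X} {w : X} :
  isotone le T -> le (T w) w -> forall n, le (Nat.iter n T w) w.
Proof.
move: space => [_ [[le_refl le_trans] _]] T_iso Tw_le.
elim=> [|n IHn] /=; first exact: le_refl.
exact: le_trans (T_iso _ _ IHn) Tw_le.
Qed.

Lemma coin_of_iterates_cv0 {T S : X -> X} {w z : X} :
  isotone le T -> le (T w) w -> le (T w) (S w) ->
  (forall i, le (S w) (Nat.iter i S z)) ->
  Un_cv (fun i => d (Nat.iter i T w) (Nat.iter i S z)) 0 ->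
  T w = S w.
Proof.
move: space => [[s_ge1 [d_ge0 [d_eq0 _]]] [[_ le_trans] _]].
move=> T_iso Tw_le TSw Sz_ge dist_cv0.
have s2_ge0 : 0 <= s ^ 2 by apply: pow_le; lra.
have dist_le n : d (T w) (S w) <=
    s ^ 2 * s ^ 2 * d (Nat.iter n.+1 T w) (Nat.iter n.+1 S z).
  have TnTw : le (Nat.iter n.+1 T w) (T w).
    exact: T_iso _ _ (iter_le_of_le T_iso Tw_le n).
  have TwSz : le (T w) (Nat.iter n.+1 S z) by exact: le_trans TSw (Sz_ge _).
  rewrite Rmult_assoc.
  apply: Rle_trans (regular_dist_left TSw (Sz_ge n.+1)) _.
  exact: Rmult_le_compat_l s2_ge0 (regular_dist_right TnTw TwSz).
apply/d_eq0/Rle_antisym => //.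
exact: Rle_0_of_le_null_tail dist_cv0 dist_le.
Qed.

End RegularBMetric.

Lemma preorder_Zorn {X : Type} {le : X -> X -> Prop} {P : X -> Prop} :
  is_preorder le -> (exists x, P x) ->
  (forall C, is_chain le C -> (exists x, C x) -> (forall x, C x -> P x) ->
     exists w, P w /\ forall x, C x -> le x w) ->
  exists w, P w /\ forall u, P u -> le w u -> le u w.
Proof.
move=> [le_refl le_trans] [x0 Px0] chain_ub.
pose leP (a b : {x | P x}) := `[< le (sval a) (sval b) >].
have [[w Pw] w_max] : exists t, premaximal leP t.
  apply: (ZL_preorder (exist _ x0 Px0)).
  - by move=> a; apply/asboolP.
  - by move=> a b c /asboolP ab /asboolP bc; apply/asboolP; exact: le_trans ab bc.
  move=> A A_total.
  pose C x := exists Px : P x, A (exist _ x Px).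
  have [[x [Px Ax]]|C_empty] := pselect (exists x, C x); last first.
    by exists (exist _ x0 Px0) => [[y Py] Ay]; case: C_empty; exists y, Py.
  have C_chain : is_chain le C.
    move=> y y' [Py Ay] [Py' Ay'].
    by case: (A_total _ _ Ay Ay') => /asboolP; [left|right].
  have C_sub y : C y -> P y by case.
  have [|w [Pw w_ub]] := chain_ub C C_chain _ C_sub; first by exists x, Px.
  by exists (exist _ w Pw) => [[y Py] Ay]; apply/asboolP/w_ub; exists Py.
exists w; split=> // u Pu wu.
exact/asboolP/(w_max (exist _ u Pu))/asboolP.
Qed.

Section CoincidenceChains.

Context {X : Type} {le : X -> X -> Prop} {T S : X -> X} {x0 : X}.
Hypotheses (le_preorder : is_preorder le) (T_iso : isotone le T).

Lemma Cstar0_singleton_cover {y : X} :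
  le (S x0) (T x0) -> le x0 y -> S y = T x0 -> Cstar0 le x0 T S (eq y).
Proof.
move: le_preorder => [le_refl _] STx0 x0y Sy.
split; [split; [|split; [|split]]|split].
- by move=> _ _ <- <-; left.
- by move=> _ <-; rewrite Sy; exact: T_iso.
- by move=> _ _ <- <- [].
- by move=> _ <-; exists x0.
- by move=> _ <-.
- by move=> _ <-; exists x0; split; first exact: le_refl.
Qed.

Lemma Cstar0_coin_chain {C : X -> Prop} :
  is_chain le C -> (forall x, C x -> Coin T S x /\ Ostar le x0 x) ->
  Cstar0 le x0 T S C.
Proof.
move: le_preorder => [le_refl _] C_chain C_coin.
split; [split; [|split; [|split]]|split] => //.
- by move=> x /C_coin [-> _].
- by move=> x y _ /C_coin [<- _] [/T_iso].
- by move=> x /C_coin [Cx _]; exists x.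
- by move=> x /C_coin [].
- by move=> x /C_coin [Cx x0x]; exists x.
Qed.

End CoincidenceChains.

Theorem theorem2p2 (X : Type) (d : X -> X -> R) (s : R) (le : X -> X -> Prop)
  (T S : X -> X) (x0 : X) :
  preordered_s_regular_bms d s le ->
  le (S x0) (T x0) ->
  isotone le T ->
  covers_from_above le S T (Ostar le x0) ->
  (forall C : X -> Prop, Cstar0 le x0 T S C ->
     exists w : X,
       (forall x, C x -> le x w) /\ le (T w) w /\
       exists z : X,
         (forall i : nat, le (S w) (Nat.iter i S z)) /\ le (T w) (S w) /\
         Un_cv (fun i : nat => d (Nat.iter i T w) (Nat.iter i S z)) 0) ->
  (exists x, Coin T S x /\ Ostar le x0 x) /\
  (exists w, maximal_in le (fun x => Coin T S x /\ Ostar le x0 x) w).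
Proof.
move=> space STx0 T_iso S_covers chain_ub.
have le_preorder : is_preorder le by case: space => _ [].
have [le_refl le_trans] := le_preorder.
have coin_ub C : Cstar0 le x0 T S C -> (exists x, C x) ->
    exists w, (Coin T S w /\ Ostar le x0 w) /\ forall x, C x -> le x w.
  move=> /[dup] [[_ [C_ge _]]] /chain_ub [w [w_ub [Tw_le [z [Sz_ge [TSw cv]]]]]].
  move=> [x Cx]; exists w; split=> //; split.
    by have := coin_of_iterates_cv0 space T_iso Tw_le TSw Sz_ge cv.
  exact: le_trans (C_ge x Cx) (w_ub x Cx).
have coin_exists : exists x, Coin T S x /\ Ostar le x0 x.
  have [y [x0y Sy]] := S_covers x0 (le_refl x0) STx0.
  have [|w [Pw _]] := coin_ub _ (Cstar0_singleton_cover le_preorder T_iso STx0 x0y Sy).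
    by exists y.
  by exists w.
split=> //.
have [|w [Pw w_max]] := preorder_Zorn le_preorder coin_exists.
  move=> C C_chain C_ne C_coin.
  exact: coin_ub (Cstar0_coin_chain le_preorder T_iso C_chain C_coin) C_ne.
exists w; split=> // [[u [Pu [wu w_ne_u]]]].
exact/w_ne_u/(regular_antisym space wu)/w_max.
Qed.
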